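(* Let $M_1=\{(t,0,0):t\in\mathbb{R}\}$ and $M_2=\{(0,t,1):t\in\mathbb{R}\}$. There exists $r_0>1$ such that every $\overline B_{r_0}$-ruled set $A\subset\mathbb H$ with $(M_1\cup M_2)\cap\overline B_{r_0}\subset A$ has nonempty interior.
   Context: $\mathbb H$ is $\mathbb{R}^3$ with product $uv=u+v+\frac12(x(u)y(v)-y(u)x(v))(0,0,1)$; a horizontal line is a set $w\{t h: t\in\mathbb{R}\}$ with $w\in\mathbb H$ and $h\in\langle(1,0,0),(0,1,0)\rangle\setminus\{0\}$. $d$ is the Carnot–Carathéodory metric, $B_r$ the closed $d$-ball of radius $r$ about $(0,0,0)$, and $\overline B_r$ its convex hull in $\mathbb{R}^3$. For a convex open (or convex) set $U\subset\mathbb H$, a set $A$ is $U$-ruled if for every horizontal line $L$ such that $L\cap U$ contains two distinct points of $A$, we have $L\cap U\subset A$. *)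

From HB Require Import structures.
From mathcomp Require Import all_boot all_order all_algebra.
From mathcomp Require Import all_classical all_reals all_analysis.
Set Implicit Arguments. Unset Strict Implicit. Unset Printing Implicit Defensive.
Import Order.TTheory GRing.Theory Num.Theory.
Import numFieldNormedType.Exports.
Local Open Scope classical_set_scope.
Local Open Scope ring_scope.

Section Heis.
Variable R : realType.

Definition H := (R * R * R)%type.
Definition hx (p : H) : R := p.1.1.
Definition hy (p : H) : R := p.1.2.
Definition hz (p : H) : R := p.2.

Definition hmul (u v : H) : H :=
  (hx u + hx v, hy u + hy v,
   hz u + hz v + 2^-1 * (hx u * hy v - hy u * hx v)).

Definition horizontal_line (L : set H) : Prop :=
  exists (w : H) (a b : R), (a != 0 \/ b != 0) /\
    L = [set hmul w (t * a, t * b, 0) | t in [set: R]].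

Definition lip01 (f : R -> R) : Prop :=
  exists C : R, forall s t, s \in `[0, 1] -> t \in `[0, 1] ->
    `|f s - f t| <= C * `|s - t|.

Definition horizontal_curve (x y z : R -> R) : Prop :=
  lip01 x /\ lip01 y /\ lip01 z /\
  {ae (@lebesgue_measure R), forall t, t \in `[0, 1] ->
     [/\ derivable x t 1, derivable y t 1, derivable z t 1 &
         derive1 z t = 2^-1 * (x t * derive1 y t - y t * derive1 x t)]}.

Definition hlength (x y : R -> R) : R :=
  fine (\int[(@lebesgue_measure R)]_(t in `[0, 1]%classic)
          (Num.sqrt (derive1 x t ^+ 2 + derive1 y t ^+ 2))%:E).

Definition cc_dist (p q : H) : R :=
  inf [set l | exists x y z : R -> R, horizontal_curve x y z /\
          (x 0, y 0, z 0) = p /\ (x 1, y 1, z 1) = q /\ l = hlength x y].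

Definition origin : H := (0, 0, 0).

Definition Bcc (r : R) : set H := [set p | cc_dist origin p <= r].

Definition hadd (u v : H) : H := (hx u + hx v, hy u + hy v, hz u + hz v).
Definition hscale (l : R) (u : H) : H := (l * hx u, l * hy u, l * hz u).
Definition convex_set (C : set H) : Prop :=
  forall u v l, C u -> C v -> 0 <= l -> l <= 1 ->
    C (hadd (hscale l u) (hscale (1 - l) v)).

Definition convex_hull (S : set H) : set H :=
  [set p | forall C, convex_set C -> S `<=` C -> C p].

Definition Bbar (r : R) : set H := convex_hull (Bcc r).

Definition ruled (U A : set H) : Prop :=
  forall L, horizontal_line L ->
    (exists p q, p != q /\ (L `&` U `&` A) p /\ (L `&` U `&` A) q) ->
    L `&` U `<=` A.

Definition M1 : set H := [set (t, 0, 0) | t in [set: R]].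
Definition M2 : set H := [set (0, t, 1) | t in [set: R]].

End Heis.

From HB Require Import structures.
From mathcomp Require Import all_boot all_order all_algebra.
From mathcomp Require Import all_classical all_reals all_analysis.
From mathcomp Require Import ring lra.
Import Order.TTheory GRing.Theory Num.Theory.
Import numFieldNormedType.Exports.
Local Open Scope classical_set_scope.
Local Open Scope ring_scope.
Set Implicit Arguments. Unset Strict Implicit.

(** 1. The cube [-100,100]^3 lies in Bbar 218: the horizontal curve
     s |-> (a s, e s + k s^2, a k s^3 / 6), with k = 6c/a and e = b - k, joins
     the origin to (a,b,c) with length at most |a| + |e| + 2|k|, which puts
     the faces x = +-100 of the cube in B_218; convexity fills in the cube.
  2. For s <> 0 the horizontal line L_s through (s,0,0) in M1 and (0,2/s,1)
     in M2 is {(s(1-l), 2l/s, l)}; these lines sweep the quadric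
     xy = 2z(1-z), and a ruled set containing M1 and M2 contains them.  For a
     point X we pick W on L_1 such that X lies on a horizontal line through W;
     this line meets the quadric in a second point V on some L_s.  If W <> V
     and all these points are in the ruled region, X is in the ruled set.
  3. At X00 = (1, 1, 3/10) the nondegeneracy conditions of step 2 hold and
     all points involved lie strictly inside the cube; by continuity this
     persists near X00, so a neighbourhood of X00 is in the ruled set. *)

Section Heisenberg.
Variable R : realType.

(** ** The cube [-100,100]^3 is contained in Bbar 218 *)

Lemma is_derive_derive1 (f : R -> R) (t df : R) :
  is_derive t 1 f df -> derivable f t 1 /\ derive1 f t = df.
Proof. by move=> h; split; [exact: ex_derive | rewrite derive1E derive_val]. Qed.

Lemma is_derive_linear (a t : R) : is_derive t 1 (fun s : R => a * s) a.
Proof. by apply: is_derive_eq; rewrite /GRing.scale /=; ring. Qed.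

Lemma is_derive_quadratic (e k t : R) :
  is_derive t 1 (fun s : R => e * s + k * s ^+ 2) (e + 2 * k * t).
Proof. by apply: is_derive_eq; rewrite /GRing.scale /=; ring. Qed.

Lemma is_derive_cubic (c t : R) :
  is_derive t 1 (fun s : R => c * s ^+ 3) (c * 3 * t ^+ 2).
Proof. by apply: is_derive_eq; rewrite /GRing.scale /=; ring. Qed.

Lemma cubic_curve_horizontal (a e k : R) :
  horizontal_curve (fun s => a * s) (fun s => e * s + k * s ^+ 2)
                   (fun s => a * k / 6 * s ^+ 3).
Proof.
split; [|split; [|split]].
- by exists `|a| => s t _ _; rewrite -mulrBr normrM.
- exists (`|e| + 2 * `|k|) => s t; rewrite !in_itv /= => hs ht.
  have -> : e * s + k * s ^+ 2 - (e * t + k * t ^+ 2) = (e + k * (s + t)) * (s - t)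
    by ring.
  rewrite normrM ler_wpM2r //.
  apply: (le_trans (ler_normD _ _)); rewrite lerD2l normrM mulrC ler_wpM2r //.
  by rewrite ger0_norm; lra.
- exists (`|a * k / 6| * 3) => s t; rewrite !in_itv /= => hs ht.
  set c := a * k / 6.
  have -> : c * s ^+ 3 - c * t ^+ 3 = c * ((s ^+ 2 + s * t + t ^+ 2) * (s - t))
    by ring.
  rewrite (normrM c) -mulrA ler_wpM2l // normrM ler_wpM2r //.
  by rewrite ger0_norm; nra.
- apply: aeW => t _.
  have [dx ->] := is_derive_derive1 (is_derive_linear a t).
  have [dy ->] := is_derive_derive1 (is_derive_quadratic e k t).
  have [dz ->] := is_derive_derive1 (is_derive_cubic (a * k / 6) t).
  by split => //; field.
Qed.

Definition speed (x y : R -> R) (t : R) : R :=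
  Num.sqrt (derive1 x t ^+ 2 + derive1 y t ^+ 2).

Lemma hlength_ge0 (x y : R -> R) : 0 <= hlength x y.
Proof.
by apply: fine_ge0; apply: integral_ge0 => t _; rewrite lee_fin sqrtr_ge0.
Qed.

Lemma hlength_le (x y : R -> R) (B : R) :
  measurable_fun (`[0, 1] : set R) (speed x y) ->
  (forall t, 0 <= t <= 1 -> speed x y t <= B) -> hlength x y <= B.
Proof.
move=> mS leSB; rewrite /hlength.
set I := (\int[_]_(_ in _) _)%E.
have I0 : (0 <= I)%E by apply: integral_ge0 => t _; rewrite lee_fin sqrtr_ge0.
have IB : (I <= B%:E)%E.
  apply: (@le_trans _ _ (\int[lebesgue_measure]_(t in `[0%R, 1%R]) (cst B%:E t))%E).
    by apply: ge0_le_integral => //; exact/measurable_realfun.measurable_EFinP.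
  by rewrite integral_cst //= lebesgue_measure_itv /= lte01 /= sube0 mule1.
have fI : I \is a fin_num by rewrite ge0_fin_numE // (le_lt_trans IB) ?ltry.
by rewrite -lee_fin fineK.
Qed.

Lemma cubic_curve_length (a e k : R) :
  hlength (fun s => a * s) (fun s => e * s + k * s ^+ 2) <= `|a| + `|e| + 2 * `|k|.
Proof.
have speedE : speed (fun s => a * s) (fun s => e * s + k * s ^+ 2) =
          fun t => Num.sqrt (a ^+ 2 + (e + 2 * k * t) ^+ 2).
  apply: funext => t; rewrite /speed.
  have [_ ->] := is_derive_derive1 (is_derive_linear a t).
  by have [_ ->] := is_derive_derive1 (is_derive_quadratic e k t).
apply: hlength_le; rewrite speedE.
  apply: measurable_funS (measurable_realfun.continuous_measurable_fun _) => //.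
  move=> t; apply: (@continuous_comp _ _ _ (fun t : R => a ^+ 2 + (e + 2 * k * t) ^+ 2));
    last exact: sqrt_continuous.
  have hd : is_derive t 1 (fun t : R => a ^+ 2 + (e + 2 * k * t) ^+ 2)
                          (2 * (e + 2 * k * t) * (2 * k)).
    by apply: is_derive_eq; rewrite /GRing.scale /=; ring.
  by apply: differentiable_continuous; apply/derivable1_diffP; exact: ex_derive.
move=> t /andP[t0 t1].
rewrite -(@ger0_norm _ (`|a| + `|e| + 2 * `|k|)) // -sqrtr_sqr ler_sqrt ?sqr_ge0 //.
have h2 : `|e + 2 * k * t| <= `|e| + 2 * `|k|.
  apply: (le_trans (ler_normD _ _)); rewrite lerD2l !normrM ger0_norm //.
  by rewrite [X in _ * X]ger0_norm // -[X in _ <= X]mulr1 ler_wpM2l.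
have ha : 0 <= `|a| by [].
have he : 0 <= `|e + 2 * k * t| by [].
rewrite -[a ^+ 2](real_normK (num_real a)) -[(e + 2 * k * t) ^+ 2](real_normK (num_real _)).
nra.
Qed.

Lemma cc_dist_le_hlength (p : H R) (x y z : R -> R) :
  horizontal_curve x y z -> (x 0, y 0, z 0) = origin R ->
  (x 1, y 1, z 1) = p -> cc_dist (origin R) p <= hlength x y.
Proof.
move=> hc h0 h1; apply: ge_inf; last by exists x, y, z.
by exists 0 => l [x' [y' [z' [_ [_ [_ ->]]]]]]; exact: hlength_ge0.
Qed.

Lemma cc_dist_le (a b c : R) : a != 0 ->
  cc_dist (origin R) (a, b, c) <= `|a| + `|b - 6 * c / a| + 2 * `|6 * c / a|.
Proof.
move=> a0; set k := 6 * c / a.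
apply: (le_trans (cc_dist_le_hlength (cubic_curve_horizontal a (b - k) k) _ _));
  last exact: cubic_curve_length.
- by rewrite /origin !(mulr0, expr0n, addr0).
- by rewrite !(mulr1, expr1n); congr (_, _, _); rewrite /k; [ring | field].
Qed.

Lemma cube_face_in_Bcc (a b c : R) : (a = 100 \/ a = -100) ->
  `|b| <= 100 -> `|c| <= 100 -> Bcc 218 (a, b, c).
Proof.
move=> ha hb hc.
have a0 : a != 0 by case: ha => ->; [|rewrite oppr_eq0]; apply/eqP; lra.
have na : `|a| = 100 by case: ha => ->; rewrite ?normrN; apply/ger0_norm; lra.
apply: (le_trans (cc_dist_le b c a0)).
have hk : `|6 * c / a| <= 6.
  rewrite normrM normfV na normrM (ger0_norm (_ : 0 <= 6)); last lra.
  by rewrite ler_pdivrMr; nra.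
have := ler_normB b (6 * c / a); rewrite na; lra.
Qed.

(** Interpolating between the two faces along the x-axis. *)
Lemma cube_in_Bbar (x y z : R) : `|x| <= 100 -> `|y| <= 100 -> `|z| <= 100 ->
  Bbar 218 (x, y, z).
Proof.
move=> bx by' bz C cC sC.
have /andP[x1 x2] : -100 <= x <= 100 by rewrite -ler_norml.
have := cC _ _ ((x + 100) / 200)
  (sC _ (cube_face_in_Bcc (or_introl erefl) by' bz))
  (sC _ (cube_face_in_Bcc (or_intror erefl) by' bz)).
have -> : hadd (hscale ((x + 100) / 200) (100, y, z))
               (hscale (1 - (x + 100) / 200) (-100, y, z)) = (x, y, z).
  by rewrite /hadd /hscale /hx /hy /hz /=; congr (_, _, _); field.
apply; first by apply: divr_ge0; lra.
by rewrite ler_pdivrMr; lra.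
Qed.

(** ** Ruled sets containing M1 and M2 *)

Lemma hmul_origin (w : H R) : hmul w (0, 0, 0) = w.
Proof.
by case: w => [[w1 w2] w3]; rewrite /hmul /hx /hy /hz /=; congr (_, _, _); ring.
Qed.

Definition on_hline (w : H R) (a b : R) (p : H R) : Prop :=
  exists t, p = hmul w (t * a, t * b, 0).

Lemma ruled_line (U A : set (H R)) (w v p : H R) (a b : R) : ruled U A ->
  A w -> A v -> U w -> U v -> U p -> w != v -> (a != 0 \/ b != 0) ->
  on_hline w a b v -> on_hline w a b p -> A p.
Proof.
move=> rA Aw Av Uw Uv Up wv ab [t1 ev] [t2 ep].
pose L := [set hmul w (t * a, t * b, 0) | t in [set: R]].
have Lw : L w by exists 0 => //; rewrite !mul0r hmul_origin.
apply: (rA L); first by exists w, a, b.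
- by exists w, v; split => //; split; split => //; split => //; exists t1.
- by split => //; exists t2.
Qed.

Lemma ruled_M1M2_line (U A : set (H R)) (s l : R) : ruled U A ->
  (@M1 R `|` @M2 R) `&` U `<=` A -> s != 0 ->
  U (s, 0, 0) -> U (0, 2 / s, 1) -> U (s * (1 - l), 2 * l / s, l) ->
  A (s * (1 - l), 2 * l / s, l).
Proof.
move=> rA sA s0 U1 U2 Up.
have A1 : A (s, 0, 0) by apply: sA; split => //; left; exists s.
have A2 : A (0, 2 / s, 1) by apply: sA; split => //; right; exists (2 / s).
apply: (ruled_line (a := - s) (b := 2 / s) rA A1 A2) => //.
- by apply/eqP => -[] _ _ /eqP; rewrite eq_sym oner_eq0.
- by left; rewrite oppr_eq0.
- by exists 1; rewrite /hmul /hx /hy /hz /=; congr (_, _, _); field.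
- by exists l; rewrite /hmul /hx /hy /hz /=; congr (_, _, _); field.
Qed.

Lemma quadric_on_M1M2_line (p1 p2 p3 : R) :
  p1 * p2 = 2 * p3 * (1 - p3) -> p1 != 0 -> 1 - p3 != 0 ->
  let s := p1 / (1 - p3) in (p1, p2, p3) = (s * (1 - p3), 2 * p3 / s, p3).
Proof.
move=> quad p10 p30 s; congr (_, _, _); rewrite /s; first by field.
have -> : p2 = p1^-1 * (p1 * p2) by rewrite mulKf.
by rewrite quad invf_div; field.
Qed.

(** Given X, the point W = (1-l, 2l, l) of the line L_1 such that X lies on
    the horizontal line through W; l is found by solving a linear equation. *)
Definition lamD (X : H R) : R := hy X + 2 * hx X - 2.
Definition lam (X : H R) : R := (hy X - 2 * hz X) / lamD X.
Definition Wx (X : H R) : R := 1 - lam X.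
Definition Wy (X : H R) : R := 2 * lam X.
Definition W (X : H R) : H R := (Wx X, Wy X, lam X).

Definition dx (X : H R) : R := hx X - Wx X.
Definition dy (X : H R) : R := hy X - Wy X.
Definition dz (X : H R) : R := hz X - lam X.

(** The point W (t dx, t dy, 0) of the horizontal line through W and X is on
    the quadric exactly for the roots t = 0 and t = tau of qa t^2 + qb t. *)
Definition qa (X : H R) : R := dx X * dy X + 2 * (dz X * dz X).
Definition qb (X : H R) : R :=
  Wx X * dy X + Wy X * dx X - 2 * dz X * (1 - 2 * lam X).
Definition tau (X : H R) : R := - qb X / qa X.

(** The second intersection point V and the slope of its line L_s. *)
Definition Vx (X : H R) : R := Wx X + tau X * dx X.
Definition Vy (X : H R) : R := Wy X + tau X * dy X.
Definition Vz (X : H R) : R := lam X + tau X * dz X.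
Definition V (X : H R) : H R := (Vx X, Vy X, Vz X).
Definition slopeV (X : H R) : R := Vx X / (1 - Vz X).

(** The choice of l makes the horizontal increment from W to X have the
    right vertical component. *)
Lemma dz_horizontal (X : H R) : lamD X != 0 ->
  dz X = 2^-1 * (Wx X * dy X - Wy X * dx X).
Proof. by rewrite /dz /dx /dy /Wx /Wy /lam /lamD => hD; field. Qed.

Lemma X_on_hline_W (X : H R) : lamD X != 0 -> on_hline (W X) (dx X) (dy X) X.
Proof.
move=> /dz_horizontal ez; exists 1; move: ez; rewrite /dz => ez.
rewrite {1}[X]surjective_pairing {1}[X.1]surjective_pairing /hmul /hx /hy /hz /=.
rewrite -/(hz X) -/(hx X) -/(hy X) -/(Wx X) -/(Wy X).
congr (_, _, _); [rewrite /dx | rewrite /dy | rewrite -[hz X](subrK (lam X)) ez];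
  by ring.
Qed.

Lemma V_on_hline_W (X : H R) : lamD X != 0 -> on_hline (W X) (dx X) (dy X) (V X).
Proof.
move=> /dz_horizontal ez; exists (tau X).
rewrite /V /Vx /Vy /Vz /hmul /hx /hy /hz /= ez.
by congr (_, _, _); ring.
Qed.

Lemma V_on_quadric (X : H R) : qa X != 0 -> Vx X * Vy X = 2 * Vz X * (1 - Vz X).
Proof. by rewrite /Vx /Vy /Vz /tau /qb /Wx /Wy /qa => hqa; field. Qed.

(** The conditions on X under which the construction works; they are open
    in X.  The third one says that W <> V. *)
Definition nondegenerate (X : H R) : Prop :=
  [/\ lamD X != 0, qa X != 0, tau X * dx X != 0, Vx X != 0 & 1 - Vz X != 0].

Lemma ruled_contains_point (U A : set (H R)) (X : H R) : ruled U A ->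
  (@M1 R `|` @M2 R) `&` U `<=` A ->
  nondegenerate X -> U (1, 0, 0) -> U (0, 2, 1) ->
  U (slopeV X, 0, 0) -> U (0, 2 / slopeV X, 1) -> U (W X) -> U (V X) -> U X -> A X.
Proof.
move=> rA sA [hD hqa hWV hVx hVz] U1 U2 Us Us' UW UV UX.
have AW : A (W X).
  have eW : W X = (1 * (1 - lam X), 2 * lam X / 1, lam X)
    by rewrite /W /Wx /Wy mul1r divr1.
  by rewrite eW; apply: (ruled_M1M2_line rA sA); rewrite -?eW ?divr1.
have AV : A (V X).
  have eV := quadric_on_M1M2_line (V_on_quadric hqa) hVx hVz.
  have s0 : slopeV X != 0 by rewrite mulf_neq0 ?invr_eq0.
  by rewrite /V eV; apply: (ruled_M1M2_line rA sA); rewrite // -eV.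
have hdx : dx X != 0 by apply: contraNneq hWV => ->; rewrite mulr0.
apply: (ruled_line rA AW AV UW UV UX _ (or_introl hdx) (V_on_hline_W hD)
                   (X_on_hline_W hD)).
apply/eqP => -[eVx _ _]; move: hWV.
have -> : tau X * dx X = 0 by move: eVx; rewrite /Vx; lra.
by rewrite eqxx.
Qed.

(** ** Continuity of the construction *)

Lemma hx_cvg (X0 : H R) : hx X @[X --> X0] --> hx X0.
Proof. by rewrite /hx; apply: cvg_comp; [exact: cvg_fst | exact: cvg_fst]. Qed.

Lemma hy_cvg (X0 : H R) : hy X @[X --> X0] --> hy X0.
Proof. by rewrite /hy; apply: cvg_comp; [exact: cvg_fst | exact: cvg_snd]. Qed.

Lemma hz_cvg (X0 : H R) : hz X @[X --> X0] --> hz X0.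
Proof. by rewrite /hz; exact: cvg_snd. Qed.

Section Continuity.
Variable X0 : H R.
Hypothesis lamD_neq0 : lamD X0 != 0.
Hypothesis qa_neq0 : qa X0 != 0.
Hypothesis Vz_neq1 : 1 - Vz X0 != 0.
Hypothesis Vx_neq0 : Vx X0 != 0.

Lemma lamD_cvg : lamD X @[X --> X0] --> lamD X0.
Proof.
apply: cvgB; last exact: cvg_cst.
by apply: cvgD; [exact: hy_cvg | apply: cvgM; [exact: cvg_cst | exact: hx_cvg]].
Qed.

Lemma lam_cvg : lam X @[X --> X0] --> lam X0.
Proof.
apply: cvgM; last exact: cvgV lamD_neq0 lamD_cvg.
by apply: cvgB; [exact: hy_cvg | apply: cvgM; [exact: cvg_cst | exact: hz_cvg]].
Qed.

Lemma Wx_cvg : Wx X @[X --> X0] --> Wx X0.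
Proof. by apply: cvgB; [exact: cvg_cst | exact: lam_cvg]. Qed.

Lemma Wy_cvg : Wy X @[X --> X0] --> Wy X0.
Proof. by apply: cvgM; [exact: cvg_cst | exact: lam_cvg]. Qed.

Lemma dx_cvg : dx X @[X --> X0] --> dx X0.
Proof. by apply: cvgB; [exact: hx_cvg | exact: Wx_cvg]. Qed.

Lemma dy_cvg : dy X @[X --> X0] --> dy X0.
Proof. by apply: cvgB; [exact: hy_cvg | exact: Wy_cvg]. Qed.

Lemma dz_cvg : dz X @[X --> X0] --> dz X0.
Proof. by apply: cvgB; [exact: hz_cvg | exact: lam_cvg]. Qed.

Lemma qa_cvg : qa X @[X --> X0] --> qa X0.
Proof.
apply: cvgD; first by apply: cvgM; [exact: dx_cvg | exact: dy_cvg].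
by apply: cvgM; [exact: cvg_cst | apply: cvgM; exact: dz_cvg].
Qed.

Lemma qb_cvg : qb X @[X --> X0] --> qb X0.
Proof.
apply: cvgB.
  by apply: cvgD; apply: cvgM;
    [exact: Wx_cvg | exact: dy_cvg | exact: Wy_cvg | exact: dx_cvg].
apply: cvgM; first by apply: cvgM; [exact: cvg_cst | exact: dz_cvg].
by apply: cvgB; [exact: cvg_cst | apply: cvgM; [exact: cvg_cst | exact: lam_cvg]].
Qed.

Lemma tau_cvg : tau X @[X --> X0] --> tau X0.
Proof. by apply: cvgM; [apply: cvgN; exact: qb_cvg | exact: cvgV qa_neq0 qa_cvg]. Qed.

Lemma Vx_cvg : Vx X @[X --> X0] --> Vx X0.
Proof. by apply: cvgD; [exact: Wx_cvg | apply: cvgM; [exact: tau_cvg | exact: dx_cvg]]. Qed.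

Lemma Vy_cvg : Vy X @[X --> X0] --> Vy X0.
Proof. by apply: cvgD; [exact: Wy_cvg | apply: cvgM; [exact: tau_cvg | exact: dy_cvg]]. Qed.

Lemma Vz_cvg : Vz X @[X --> X0] --> Vz X0.
Proof. by apply: cvgD; [exact: lam_cvg | apply: cvgM; [exact: tau_cvg | exact: dz_cvg]]. Qed.

Lemma slopeV_cvg : slopeV X @[X --> X0] --> slopeV X0.
Proof.
apply: cvgM; first exact: Vx_cvg.
by apply: cvgV Vz_neq1 _; apply: cvgB; [exact: cvg_cst | exact: Vz_cvg].
Qed.

Lemma inv_slopeV_cvg : 2 / slopeV X @[X --> X0] --> 2 / slopeV X0.
Proof.
apply: cvgM; first exact: cvg_cst.
apply: cvgV slopeV_cvg.
by rewrite mulf_neq0 ?invr_eq0.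
Qed.

Lemma near_nondegenerate : tau X0 * dx X0 != 0 ->
  \forall X \near X0, nondegenerate X.
Proof.
move=> WV_neq; near=> X; split; near: X.
- exact: cvgr_neq0 lamD_cvg lamD_neq0.
- exact: cvgr_neq0 qa_cvg qa_neq0.
- by apply: cvgr_neq0 WV_neq; apply: cvgM; [exact: tau_cvg | exact: dx_cvg].
- exact: cvgr_neq0 Vx_cvg Vx_neq0.
- by apply: cvgr_neq0 Vz_neq1; apply: cvgB; [exact: cvg_cst | exact: Vz_cvg].
Unshelve. all: by end_near.
Qed.

End Continuity.

Lemma near_Bbar (X0 : H R) (f g h : H R -> R) :
  f X @[X --> X0] --> f X0 -> g X @[X --> X0] --> g X0 -> h X @[X --> X0] --> h X0 ->
  `|f X0| < 100 -> `|g X0| < 100 -> `|h X0| < 100 ->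
  \forall X \near X0, Bbar 218 (f X, g X, h X).
Proof.
move=> cf cg ch bf bg bh; near=> X; apply: cube_in_Bbar; near: X.
- exact: cvgr_norm_le cf _ bf.
- exact: cvgr_norm_le cg _ bg.
- exact: cvgr_norm_le ch _ bh.
Unshelve. all: by end_near.
Qed.

(** ** The construction at X00 = (1, 1, 3/10) *)

Definition X00 : H R := (1, 1, 3 / 10).

Lemma lamD_X00 : lamD X00 = 1. Proof. by rewrite /lamD /hx /hy /=; ring. Qed.
Lemma lam_X00 : lam X00 = 2 / 5. Proof. by rewrite /lam lamD_X00 /hy /hz /=; field. Qed.
Lemma Wx_X00 : Wx X00 = 3 / 5. Proof. by rewrite /Wx lam_X00; field. Qed.
Lemma Wy_X00 : Wy X00 = 4 / 5. Proof. by rewrite /Wy lam_X00; field. Qed.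
Lemma dx_X00 : dx X00 = 2 / 5. Proof. by rewrite /dx Wx_X00 /hx /=; field. Qed.
Lemma dy_X00 : dy X00 = 1 / 5. Proof. by rewrite /dy Wy_X00 /hy /=; field. Qed.
Lemma dz_X00 : dz X00 = - 1 / 10. Proof. by rewrite /dz lam_X00 /hz /=; field. Qed.
Lemma qa_X00 : qa X00 = 1 / 10. Proof. by rewrite /qa dx_X00 dy_X00 dz_X00; field. Qed.
Lemma qb_X00 : qb X00 = 12 / 25.
Proof. by rewrite /qb Wx_X00 Wy_X00 dx_X00 dy_X00 dz_X00 lam_X00; field. Qed.
Lemma tau_X00 : tau X00 = - 24 / 5. Proof. by rewrite /tau qa_X00 qb_X00; field. Qed.
Lemma Vx_X00 : Vx X00 = - 33 / 25. Proof. by rewrite /Vx Wx_X00 tau_X00 dx_X00; field. Qed.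
Lemma Vy_X00 : Vy X00 = - 4 / 25. Proof. by rewrite /Vy Wy_X00 tau_X00 dy_X00; field. Qed.
Lemma Vz_X00 : Vz X00 = 22 / 25. Proof. by rewrite /Vz lam_X00 tau_X00 dz_X00; field. Qed.
Lemma slopeV_X00 : slopeV X00 = - 11. Proof. by rewrite /slopeV Vx_X00 Vz_X00; field. Qed.

Lemma near_X00 : \forall X \near X00, nondegenerate X /\
  [/\ Bbar 218 (slopeV X, 0, 0), Bbar 218 (0, 2 / slopeV X, 1),
      Bbar 218 (W X), Bbar 218 (V X) & Bbar 218 X].
Proof.
have lamD0 : lamD X00 != 0 by rewrite lamD_X00 oner_neq0.
have qa0 : qa X00 != 0 by rewrite qa_X00; apply/eqP; lra.
have Vz1 : 1 - Vz X00 != 0 by rewrite Vz_X00; apply/eqP; lra.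
have Vx0 : Vx X00 != 0 by rewrite Vx_X00; apply/eqP; lra.
have WV : tau X00 * dx X00 != 0 by rewrite tau_X00 dx_X00; apply/eqP; lra.
near=> X; split; first by near: X; exact: near_nondegenerate.
split; near: X.
- apply: (near_Bbar (slopeV_cvg lamD0 qa0 Vz1) (cvg_cst _) (cvg_cst _));
    rewrite ?normr0 ?slopeV_X00 ?ltr_norml; lra.
- apply: (near_Bbar (cvg_cst _) (inv_slopeV_cvg lamD0 qa0 Vz1 Vx0) (cvg_cst _));
    rewrite ?normr0 ?normr1 ?slopeV_X00 ?ltr_norml; lra.
- apply: (near_Bbar (Wx_cvg lamD0) (Wy_cvg lamD0) (lam_cvg lamD0));
    rewrite ?Wx_X00 ?Wy_X00 ?lam_X00 ltr_norml; lra.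
- apply: (near_Bbar (Vx_cvg lamD0 qa0) (Vy_cvg lamD0 qa0) (Vz_cvg lamD0 qa0));
    rewrite ?Vx_X00 ?Vy_X00 ?Vz_X00 ltr_norml; lra.
- apply: filterS (near_Bbar (@hx_cvg X00) (@hy_cvg X00) (@hz_cvg X00) _ _ _);
    first by move=> [[x y] z].
  all: by rewrite /hx /hy /hz /= ?normr1 ?ltr_norml; lra.
Unshelve. all: by end_near.
Qed.

End Heisenberg.

Theorem mainTheorem18 (R : realType) :
  exists r0 : R, 1 < r0 /\
    forall A : set (H R),
      ruled (Bbar r0) A ->
      (@M1 R `|` @M2 R) `&` Bbar r0 `<=` A ->
      interior A !=set0.
Proof.
exists 218; split; first lra.
move=> A rA sA; exists (X00 R); rewrite /interior /=.
apply: filterS (near_X00 R) => X [nondeg [Us Us' UW UV UX]].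
by apply: (ruled_contains_point rA sA nondeg) => //; apply: cube_in_Bbar;
  rewrite ?normr0 ?normr1 ?(@ger0_norm _ 2) //; lra.
Qed.
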